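(* Let $(P,\preceq)$ be a poset, $\mathcal{X}:=\{X\subseteq P\mid (X,\preceq)\text{ well-ordered}\}$, $\Lambda$ a set, $\mathcal{I},\mathcal{O}\subseteq\Lambda$ finite disjoint sets, $s$ a causal $(\mathcal{I},\mathcal{O})$-system over $\mathcal{X}$, $i\in\mathcal{I}$, $o\in\mathcal{O}$. For $\mathbf{X}\in\mathcal{X}^{\mathcal{I}\setminus\{i\}}$ let $\phi(\mathbf{X})$ denote the unique $X_i\in\mathcal{X}$ with $s(\mathbf{X}\cup\{(i,X_i)\})(o)=X_i$. Then for all $\mathbf{X},\mathbf{X}'\in\mathcal{X}^{\mathcal{I}\setminus\{i\}}$ and all $y\in\phi(\mathbf{X})\mathbin{\triangle}\phi(\mathbf{X}')$ there exist $i'\in\mathcal{I}\setminus\{i\}$ and $x\in\mathbf{X}(i')\mathbin{\triangle}\mathbf{X}'(i')$ with $x\prec y$.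
   Context: $\mathcal{X}^{\mathcal{I}}$ is the set of functions $\mathcal{I}\to\mathcal{X}$. $\mathbin{\triangle}$ denotes symmetric difference; $x\prec y$ means $x\preceq y$ and $x\ne y$. A causal $(\mathcal{I},\mathcal{O})$-system over $\mathcal{X}$ is a function $s:\mathcal{X}^{\mathcal{I}}\to\mathcal{X}^{\mathcal{O}}$ such that for all $\mathbf{X},\mathbf{X}'\in\mathcal{X}^{\mathcal{I}}$, $o\in\mathcal{O}$, $y\in s(\mathbf{X})(o)\mathbin{\triangle}s(\mathbf{X}')(o)$ there exist $i\in\mathcal{I}$ and $x\in\mathbf{X}(i)\mathbin{\triangle}\mathbf{X}'(i)$ with $x\prec y$. (For such systems the fixed point $\phi(\mathbf{X})$ exists and is unique.) *)

From Stdlib Require Import List ClassicalDescription.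
Set Implicit Arguments.

Definition is_poset (P : Type) (le : P -> P -> Prop) : Prop :=
  (forall x, le x x) /\
  (forall x y, le x y -> le y x -> x = y) /\
  (forall x y z, le x y -> le y z -> le x z).

Definition slt (P : Type) (le : P -> P -> Prop) (x y : P) : Prop := le x y /\ x <> y.

Definition symdiff (T : Type) (A B : T -> Prop) (x : T) : Prop :=
  (A x /\ ~ B x) \/ (B x /\ ~ A x).

Definition well_ordered (P : Type) (le : P -> P -> Prop) (X : P -> Prop) : Prop :=
  (forall x y, X x -> X y -> le x y \/ le y x) /\
  (forall S : P -> Prop, (forall x, S x -> X x) -> (exists x, S x) ->
     exists m, S m /\ forall x, S x -> le m x).

Definition WO (P : Type) (le : P -> P -> Prop) : Type :=
  { X : P -> Prop | well_ordered le X }.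

Definition finite_set (L : Type) (A : L -> Prop) : Prop :=
  exists l : list L, forall x, A x -> In x l.

Definition elems (L : Type) (A : L -> Prop) : Type := { l : L | A l }.

Definition causal (P : Type) (le : P -> P -> Prop) (L : Type) (I O : L -> Prop)
  (s : (elems I -> WO le) -> (elems O -> WO le)) : Prop :=
  forall (X X' : elems I -> WO le) (o : elems O) (y : P),
    symdiff (proj1_sig (s X o)) (proj1_sig (s X' o)) y ->
    exists (i : elems I) (x : P),
      symdiff (proj1_sig (X i)) (proj1_sig (X' i)) x /\ slt le x y.

Definition Iminus (L : Type) (I : L -> Prop) (i : L) : L -> Prop :=
  fun l => I l /\ l <> i.

(* X \cup {(i, Xi)} : the extension of X : I\{i} -> WO to I *)
Definition extend (P : Type) (le : P -> P -> Prop) (L : Type) (I : L -> Prop)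
  (i : elems I) (X : elems (Iminus I (proj1_sig i)) -> WO le) (Xi : WO le)
  : elems I -> WO le :=
  fun j =>
    match excluded_middle_informative (proj1_sig j = proj1_sig i) with
    | left _ => Xi
    | right h => X (exist _ (proj1_sig j) (conj (proj2_sig j) h))
    end.

(** Argue by well-founded induction on [y] in [phiX ∪ phiX'], which is
    well-founded as a union of two well-ordered sets.  Causality of [s],
    applied to the two fixed-point equations, yields an input [j] and
    [x ≺ y] in the symmetric difference of the [j]-th inputs.  If [j] is not
    [i] this is the required witness; if [j = i], then [x] lies in
    [phiX △ phiX'], so by induction it has a witness [x' ≺ x ≺ y]. *)
From Stdlib Require Import Classical ClassicalDescription.

Set Implicit Arguments.

Section Minimal.

Variables (P : Type) (le : P -> P -> Prop).

Definition minimal_in (S : P -> Prop) (m : P) : Prop :=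
  S m /\ forall w, S w -> ~ slt le w m.

Definition well_founded_on (U : P -> Prop) : Prop :=
  forall S : P -> Prop, (forall x, S x -> U x) -> (exists x, S x) ->
    exists m, minimal_in S m.

Lemma well_founded_on_ind {U Q : P -> Prop} :
  well_founded_on U ->
  (forall y, U y -> (forall x, U x -> slt le x y -> Q x) -> Q y) ->
  forall y, U y -> Q y.
Proof.
  intros Hwf Hstep y Uy.
  apply NNPP; intro NQy.
  destruct (Hwf (fun z => U z /\ ~ Q z)) as [m [[Um NQm] Hm]];
    [now intros z [] | now exists y |].
  apply NQm, Hstep; [exact Um |].
  intros x Ux Hxm.
  apply NNPP; intro NQx.
  exact (Hm x (conj Ux NQx) Hxm).
Qed.

Hypothesis Hpo : is_poset le.

Lemma slt_trans (x y z : P) : slt le x y -> slt le y z -> slt le x z.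
Proof.
  destruct Hpo as [_ [Hanti Htrans]].
  intros [Hxy _] [Hyz Hneq]; split; [eauto |].
  intros <-; apply Hneq, Hanti; assumption.
Qed.

Lemma least_minimal_in (S : P -> Prop) (m : P) :
  S m -> (forall w, S w -> le m w) -> minimal_in S m.
Proof.
  destruct Hpo as [_ [Hanti _]].
  intros Sm Hm; split; [exact Sm |].
  intros w Sw [Hwm Hneq]; apply Hneq, Hanti; auto.
Qed.

Lemma well_ordered_least {A S : P -> Prop} :
  well_ordered le A -> (exists x, S x /\ A x) ->
  exists m, (S m /\ A m) /\ forall w, S w /\ A w -> le m w.
Proof.
  intros [_ Hleast] Hex.
  apply Hleast; [now intros x [] | exact Hex].
Qed.

(* If the least element [m1] of [S ∩ A] is not minimal in [S], some [w ≺ m1]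
   of [S] lies in [B], and then the least element of [S ∩ B] is minimal:
   anything of [S ∩ A] below it would lie below [w ≺ m1]. *)
Lemma well_ordered_union_well_founded (A B : P -> Prop) :
  well_ordered le A -> well_ordered le B ->
  well_founded_on (fun x => A x \/ B x).
Proof.
  intros HA HB S HS [x0 Sx0].
  pose proof Hpo as [_ [Hanti Htrans]].
  destruct (classic (exists x, S x /\ A x)) as [HexA | HnoA].
  2:{ assert (HSB : forall w, S w -> B w)
        by (intros w Sw; destruct (HS w Sw); [exfalso; eauto | assumption]).
      destruct (well_ordered_least HB (ex_intro _ x0 (conj Sx0 (HSB x0 Sx0))))
        as [m [[Sm _] Hm]].
      exists m; apply least_minimal_in; [exact Sm |].
      intros w Sw; apply Hm; auto. }
  destruct (well_ordered_least HA HexA) as [m1 [[Sm1 Am1] Hm1]].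
  destruct (classic (exists w, S w /\ slt le w m1)) as [[w [Sw [Hwm1 Hneq]]] | Hno].
  2:{ exists m1; split; [exact Sm1 |]. intros w Sw Hw; eauto. }
  assert (Bw : B w).
  { destruct (HS w Sw) as [Aw | Bw]; [| exact Bw].
    exfalso; apply Hneq, Hanti; auto. }
  destruct (well_ordered_least HB (ex_intro _ w (conj Sw Bw)))
    as [m2 [[Sm2 Bm2] Hm2]].
  exists m2; split; [exact Sm2 |].
  intros v Sv [Hvm2 Hvneq]; apply Hvneq, Hanti; [exact Hvm2 |].
  destruct (HS v Sv) as [Av | Bv]; [| now apply Hm2].
  apply Htrans with m1; [| now apply Hm1].
  apply Htrans with w; [now apply Hm2 | exact Hwm1].
Qed.

End Minimal.

Lemma extend_cases (L : Type) (I : L -> Prop) (i j : elems I) :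
  (forall P (le : P -> P -> Prop) X (Xi : WO le), extend i X Xi j = Xi) \/
  exists i' : elems (Iminus I (proj1_sig i)),
    forall P (le : P -> P -> Prop) X (Xi : WO le), extend i X Xi j = X i'.
Proof.
  unfold extend.
  destruct (excluded_middle_informative (proj1_sig j = proj1_sig i)) as [_ | Hne].
  - now left.
  - right; eexists; reflexivity.
Qed.

Theorem lemma6p5 (P : Type) (le : P -> P -> Prop) (L : Type) (I O : L -> Prop)
  (s : (elems I -> WO le) -> (elems O -> WO le)) (i : elems I) (o : elems O) :
  is_poset le ->
  finite_set I -> finite_set O ->
  (forall l, I l -> O l -> False) ->
  causal s ->
  forall (X X' : elems (Iminus I (proj1_sig i)) -> WO le) (phiX phiX' : WO le),
    s (extend i X phiX) o = phiX ->
    s (extend i X' phiX') o = phiX' ->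
    forall y : P, symdiff (proj1_sig phiX) (proj1_sig phiX') y ->
    exists (i' : elems (Iminus I (proj1_sig i))) (x : P),
      symdiff (proj1_sig (X i')) (proj1_sig (X' i')) x /\ slt le x y.
Proof.
  intros Hpo _ _ _ Hcausal X X' phiX phiX' HfixX HfixX' y Hy.
  assert (Uy : proj1_sig phiX y \/ proj1_sig phiX' y)
    by (destruct Hy as [[] | []]; auto).
  revert y Uy Hy.
  apply (well_founded_on_ind (Q := fun y => symdiff _ _ y -> _)
           (well_ordered_union_well_founded Hpo (proj2_sig phiX) (proj2_sig phiX'))).
  intros y _ IH Hy.
  destruct (Hcausal (extend i X phiX) (extend i X' phiX') o y) as [j [x [Hx Hxy]]].
  { now rewrite HfixX, HfixX'. }
  destruct (extend_cases i j) as [Hj | [i' Hj]]; rewrite !Hj in Hx.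
  - assert (Ux : proj1_sig phiX x \/ proj1_sig phiX' x)
      by (destruct Hx as [[] | []]; auto).
    destruct (IH x Ux Hxy Hx) as [i' [x' [Hx' Hx'x]]].
    exists i', x'; split; [exact Hx' |].
    exact (slt_trans Hpo Hx'x Hxy).
  - now exists i', x.
Qed.
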